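(* For matrices $A\in\mathbb{Z}_{\geq0}^{m\times 3}$ there exists a polynomial-time 2-approximation algorithm for computing $\gamma(A)$.
   Context: For $A\in\mathbb{R}^{m\times d}$ and $\Pi=(\pi_1,\dots,\pi_d)\in\mathfrak{S}(m)^d$ (where $\mathfrak{S}(m)$ is the symmetric group on $\{1,\dots,m\}$), $A^\Pi$ denotes the matrix with $A^\Pi_{i,j}=A_{\pi_j^{-1}(i),j}$. Define $\gamma(A)=\min_{\Pi\in\mathfrak{S}(m)^d}\max_{1\leq i\leq m}\sum_{j=1}^d A^\Pi_{i,j}$, the smallest achievable maximal row sum after permuting the entries within each column independently. A 2-approximation algorithm outputs column permutations whose maximal row sum is at most $2\gamma(A)$. *)

From mathcomp Require Import all_boot all_order all_fingroup all_algebra.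
Set Implicit Arguments. Unset Strict Implicit. Unset Printing Implicit Defensive.

Definition permute_cols (m d : nat) (A : 'M[nat]_(m, d))
  (P : {ffun 'I_d -> 'S_m}) : 'M[nat]_(m, d) :=
  \matrix_(i < m, j < d) A (((P j)^-1)%g i) j.

Definition maxrowsum (m d : nat) (A : 'M[nat]_(m, d))
  (P : {ffun 'I_d -> 'S_m}) : nat :=
  \max_(i < m) \sum_(j < d) permute_cols A P i j.

Definition gamma (m d : nat) (A : 'M[nat]_(m, d)) : nat :=
  maxrowsum A [arg min_(P < [ffun => 1%g] : {ffun 'I_d -> 'S_m}) maxrowsum A P].

(* Memory is nat -> nat (cells = registers). Unit-cost RAM without
   multiplication is polynomially equivalent to Turing machines. *)
Inductive instr : Type :=
| IConst of nat & nat
| IAdd of nat & nat & nat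
| ISub of nat & nat & nat    (* ISub r a b   : mem[r] := mem[a] - mem[b] (trunc) *)
| ILoad of nat & nat
| IStore of nat & nat
| IJle of nat & nat & nat
| IHalt.

Definition upd (M : nat -> nat) (x v : nat) : nat -> nat :=
  fun y => if y == x then v else M y.

(* one step; None when the machine has halted (pc out of range or IHalt) *)
Definition step (p : seq instr) (s : nat * (nat -> nat)) :
  option (nat * (nat -> nat)) :=
  let: (pc, M) := s in
  match nth IHalt p pc with
  | IConst r c => Some (pc.+1, upd M r c)
  | IAdd r a b => Some (pc.+1, upd M r (M a + M b))
  | ISub r a b => Some (pc.+1, upd M r (M a - M b))
  | ILoad r a => Some (pc.+1, upd M r (M (M a)))
  | IStore a r => Some (pc.+1, upd M (M a) (M r))
  | IJle a b l => Some (if M a <= M b then l else pc.+1, M)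
  | IHalt => None
  end.

Fixpoint exec (p : seq instr) (t : nat) (s : nat * (nat -> nat)) :
  option (nat -> nat) :=
  match step p s with
  | None => Some s.2
  | Some s' => if t is t'.+1 then exec p t' s' else None
  end.

(* entry (r, c) of A, 0 outside the range *)
Definition entry (m d : nat) (A : 'M[nat]_(m, d)) (r c : nat) : nat :=
  match @insub nat (fun x => x < m) 'I_m r, @insub nat (fun x => x < d) 'I_d c with
  | Some i, Some j => A i j
  | _, _ => 0
  end.

(* Input encoding: mem[0] = m, mem[1 + d*i + j] = A i j, all else 0. *)
Definition encode_input (m d : nat) (A : 'M[nat]_(m, d)) : nat -> nat :=
  fun x => match x with
           | 0 => m
           | y.+1 => if y < d * m then entry A (y %/ d) (y %% d) else 0
           end.

(* Output convention: mem[1 + d*i + j] = pi_j(i), the row to which the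
   entry (i, j) is moved. *)
Definition output_encodes (m d : nat) (M : nat -> nat)
  (P : {ffun 'I_d -> 'S_m}) : Prop :=
  forall (i : 'I_m) (j : 'I_d), M (1 + d * i + j) = nat_of_ord (P j i).

Definition input_size (m d : nat) (A : 'M[nat]_(m, d)) : nat :=
  m + \sum_(i < m) \sum_(j < d) (trunc_log 2 (A i j)).+1.

(* Sort column 0 increasingly and column 1 decreasingly, and let column 2 follow
   column 0.  If row r then receives a_i, b_l and c_i, the m - r entries of column 0
   that are at least a_i and the r + 1 entries of column 1 that are at least b_l must
   share a row in any arrangement, whence a_i + b_l <= gamma; as c_i <= gamma, every
   row sum is at most 2 gamma.  The sorting permutations are given by ranks, which a
   RAM program computes with O(m^2) comparisons. *)

From mathcomp Require Import all_boot all_order all_fingroup all_algebra.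
From mathcomp Require Import zify.
Set Implicit Arguments. Unset Strict Implicit. Unset Printing Implicit Defensive.

Lemma count_ltn_subpred T (a b : pred T) (s : seq T) :
  subpred a b -> has (predD b a) s -> count a s < count b s.
Proof.
move=> sub_ab; elim: s => //= x s IHs /orP[/andP[/negbTE-> ->]|has_s].
  by rewrite add0n add1n ltnS sub_count.
by have := IHs has_s; case: (a x) (@sub_ab x) => [->//|_]; rewrite ?add0n; lia.
Qed.

Section Rank.

Variable lt : rel nat.
Hypothesis lt_irr : irreflexive lt.
Hypothesis lt_trans : transitive lt.
Hypothesis lt_total : forall x y, x != y -> lt x y || lt y x.

Definition rank m i := count (lt^~ i) (iota 0 m).

Lemma rank_ltn m i : i < m -> rank m i < m.
Proof.
move=> lt_im; rewrite /rank -[X in _ < X](size_iota 0 m) -count_predT.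
by apply: count_ltn_subpred => //; apply/hasP; exists i; rewrite ?mem_iota //= lt_irr.
Qed.

Lemma rank_mono m k i : k < m -> lt k i -> rank m k < rank m i.
Proof.
move=> lt_km lt_ki; apply: count_ltn_subpred => [x /= lt_xk|].
  exact: lt_trans lt_xk lt_ki.
by apply/hasP; exists k; rewrite ?mem_iota //= lt_irr lt_ki.
Qed.

Lemma rank_ord_inj m : injective (fun i : 'I_m => Ordinal (rank_ltn (ltn_ord i))).
Proof.
move=> i j [eq_ij]; apply/val_inj/eqP; apply: contraT => /lt_total/orP[] lt_ij.
  by have := rank_mono (ltn_ord i) lt_ij; rewrite eq_ij ltnn.
by have := rank_mono (ltn_ord j) lt_ij; rewrite eq_ij ltnn.
Qed.

Definition rank_perm m : 'S_m := perm (@rank_ord_inj m).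

Lemma rank_permE m (i : 'I_m) : rank_perm m i = rank m i :> nat.
Proof. by rewrite permE. Qed.

Lemma rank_perm_le m (i k : 'I_m) : rank_perm m i <= rank_perm m k -> ~~ lt k i.
Proof.
rewrite !rank_permE => le_ik; apply/negP => /(rank_mono (ltn_ord k)); lia.
Qed.

End Rank.

Definition lex_lt (f : nat -> nat) : rel nat :=
  fun k i => (f k < f i) || (f k == f i) && (k < i).

Lemma lex_lt_irr f : irreflexive (lex_lt f).
Proof. rewrite /lex_lt => x; lia. Qed.
Lemma lex_lt_trans f : transitive (lex_lt f).
Proof. rewrite /lex_lt => y x z; lia. Qed.
Lemma lex_lt_total f x y : x != y -> lex_lt f x y || lex_lt f y x.
Proof. rewrite /lex_lt; lia. Qed.

Definition lex_gt (f : nat -> nat) : rel nat := fun k i => lex_lt f i k.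

Lemma lex_gt_irr f : irreflexive (lex_gt f).
Proof. exact: lex_lt_irr. Qed.
Lemma lex_gt_trans f : transitive (lex_gt f).
Proof. by move=> y x z h1 h2; apply: lex_lt_trans h2 h1. Qed.
Lemma lex_gt_total f x y : x != y -> lex_gt f x y || lex_gt f y x.
Proof. by rewrite orbC; apply: lex_lt_total. Qed.

Lemma lex_ltE f k i : k != i -> lex_lt f k i = (f k < f i + (k < i)).
Proof. rewrite /lex_lt; lia. Qed.

Lemma lex_gtE f k i : k != i -> lex_gt f k i = (f i + (k < i) <= f k).
Proof. rewrite /lex_gt /lex_lt; lia. Qed.

Definition ascending_perm m (f : nat -> nat) : 'S_m :=
  rank_perm (@lex_lt_irr f) (@lex_lt_trans f) (@lex_lt_total f) m.
Definition descending_perm m (f : nat -> nat) : 'S_m :=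
  rank_perm (@lex_gt_irr f) (@lex_gt_trans f) (@lex_gt_total f) m.

Lemma ascending_perm_le m f (i k : 'I_m) :
  ascending_perm m f i <= ascending_perm m f k -> f i <= f k.
Proof. by move/rank_perm_le; rewrite /lex_lt; lia. Qed.

Lemma descending_perm_le m f (i k : 'I_m) :
  descending_perm m f i <= descending_perm m f k -> f k <= f i.
Proof. by move/rank_perm_le; rewrite /lex_gt /lex_lt; lia. Qed.

Lemma perm_meet m (s t : 'S_m) (r : 'I_m) :
  exists x y : 'I_m, [/\ r <= x, y <= r & s x = t y].
Proof.
pose X := [set x : 'I_m | r <= x]; pose Y := [set y : 'I_m | y <= r].
have XUY : X :|: Y = setT by apply/setP => x; rewrite !inE leq_total.
have XIY : X :&: Y = [set r].
  by apply/setP => x; rewrite !inE -eqn_leq eq_sym.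
have cardXY : #|X| + #|Y| = m.+1.
  by rewrite -cardsUI XUY XIY cardsT card_ord cards1 addn1.
have : 0 < #|(s @: X) :&: (t @: Y)|.
  have := cardsUI (s @: X) (t @: Y).
  rewrite !card_imset; [|exact: perm_inj..].
  have : #|s @: X :|: t @: Y| <= m by rewrite -[m in _ <= m]card_ord max_card.
  rewrite cardXY; lia.
case/card_gt0P => q; rewrite inE => /andP[/imsetP[x + ->] /imsetP[y + eq_xy]].
by rewrite !inE => le_rx le_yr; exists x, y.
Qed.

Lemma entry_ord m d (A : 'M[nat]_(m, d)) (i : 'I_m) (j : 'I_d) : entry A i j = A i j.
Proof. by rewrite /entry !valK. Qed.

Definition sorting_perms m (A : 'M[nat]_(m, 3)) : {ffun 'I_3 -> 'S_m} :=
  [ffun j : 'I_3 => if j == 1 :> nat then descending_perm m (fun k => entry A k 1)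
                    else ascending_perm m (fun k => entry A k 0)].

Lemma rowsum_le_maxrowsum m d (A : 'M[nat]_(m, d)) (P : {ffun 'I_d -> 'S_m}) (q : 'I_m) :
  \sum_(j < d) A ((P j)^-1%g q) j <= maxrowsum A P.
Proof.
rewrite (eq_bigr (fun j => permute_cols A P q j)) => [|j _]; last by rewrite mxE.
exact: (leq_bigmax (F := fun q => \sum_(j < d) permute_cols A P q j)).
Qed.

Lemma big_ord3 (F : 'I_3 -> nat) :
  \sum_(j < 3) F j = F (inord 0) + F (inord 1) + F (inord 2).
Proof.
by rewrite !big_ord_recr big_ord0; congr (_ + _ + _); congr F; apply/val_inj; rewrite /= inordK.
Qed.

Lemma maxrowsum_sorting_perms m (A : 'M[nat]_(m, 3)) (Q : {ffun 'I_3 -> 'S_m}) :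
  maxrowsum A (sorting_perms A) <= 2 * maxrowsum A Q.
Proof.
apply/bigmax_leqP => r _; rewrite big_ord3 !mxE !ffunE !inordK //=.
set a := fun k => entry A k 0; set b := fun k => entry A k 1.
set pa := ascending_perm m a; set pb := descending_perm m b.
set i := (pa^-1)%g r; set l := (pb^-1)%g r.
have [x [y [le_rx le_yr]]] := perm_meet (pa^-1 * Q (inord 0))%g (pb^-1 * Q (inord 1))%g r.
rewrite !permM; set k := (pa^-1)%g x; set k' := (pb^-1)%g y => eq_xy.
have le_ik : A i (inord 0) <= A k (inord 0).
  by rewrite -!entry_ord inordK //; apply: (@ascending_perm_le m a); rewrite !permKV.
have le_lk' : A l (inord 1) <= A k' (inord 1).
  by rewrite -!entry_ord inordK //; apply: (@descending_perm_le m b); rewrite !permKV.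
have row_k := rowsum_le_maxrowsum A Q (Q (inord 0) k).
rewrite big_ord3 permK {1}eq_xy permK in row_k.
have row_i := rowsum_le_maxrowsum A Q (Q (inord 2) i).
rewrite big_ord3 permK in row_i.
lia.
Qed.

Section Reach.

Variable p : seq instr.

Definition runs pc M n pc' M' :=
  forall t, exec p (n + t) (pc, M) = exec p t (pc', M').

Definition reach pc M N pc' (Q : (nat -> nat) -> Prop) :=
  exists n M', [/\ n <= N, Q M' & runs pc M n pc' M'].

Lemma exec_step t s s' : step p s = Some s' -> exec p t.+1 s = exec p t s'.
Proof.
move=> e; change (match step p s with None => Some s.2 | Some s1 => exec p t s1 end = exec p t s').
by rewrite e.
Qed.

Lemma reach_done pc M N (Q : (nat -> nat) -> Prop) : Q M -> reach pc M N pc Q.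
Proof. by exists 0, M. Qed.

Lemma reach_step pc M N pc' Q :
  (match step p (pc, M) with
   | Some (pc1, M1) => reach pc1 M1 N pc' Q | None => False end) ->
  reach pc M N.+1 pc' Q.
Proof.
case e: step => [[pc1 M1]|] // [n [M' [le_nN QM' run]]].
by exists n.+1, M'; split=> // t; rewrite addSn (exec_step _ e) run.
Qed.

Lemma reach_seq pc M N1 pc1 Q1 N2 pc2 Q2 :
  reach pc M N1 pc1 Q1 -> (forall M1, Q1 M1 -> reach pc1 M1 N2 pc2 Q2) ->
  reach pc M (N1 + N2) pc2 Q2.
Proof.
move=> [n1 [M1 [le1 Q1M1 run1]]] /(_ _ Q1M1) [n2 [M2 [le2 Q2M2 run2]]].
by exists (n1 + n2), M2; split=> [|//|t]; [rewrite leq_add | rewrite -addnA run1 run2].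
Qed.

Lemma reach_weaken pc M N N' pc' Q :
  N <= N' -> reach pc M N pc' Q -> reach pc M N' pc' Q.
Proof. by move=> le_NN' [n [M' [le_nN *]]]; exists n, M'; split=> //; apply: leq_trans le_NN'. Qed.

Lemma reach_halt pc M N pc' Q : nth IHalt p pc' = IHalt ->
  reach pc M N pc' Q -> exists2 M', Q M' & exec p N (pc, M) = Some M'.
Proof.
move=> halt [n [M' [le_nN QM' run]]]; exists M' => //.
by rewrite -(subnKC le_nN) run; case: (N - n) => /=; rewrite /step halt.
Qed.

Lemma reach_stepN pc M N pc' Q : 0 < N ->
  (match step p (pc, M) with
   | Some (pc1, M1) => reach pc1 M1 (N - 1) pc' Q | None => False end) ->
  reach pc M N pc' Q.
Proof. by move=> N_gt0 h; rewrite -[N](subnK N_gt0) addn1; apply: reach_step. Qed.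

Lemma reach_upd pc M r v r' v' N pc' Q : r = r' -> v = v' ->
  reach pc (upd M r' v') N pc' Q -> reach pc (upd M r v) N pc' Q.
Proof. by move=> -> ->. Qed.

End Reach.

(* Memory layout, with B = 32 m.  Cells 0 .. 20 serve as registers: cell 0 holds m
   and later a pointer, cells 1 .. 6 the constants 1, 0, 3, 32, B and 2 B, the others
   counters and scratch values; row counters are kept as multiples of 32 so that they
   compare with B.  The first seven input rows (cells 1 .. 21) are saved to B .. B + 20
   and the other rows copied behind them, so that entry (k, j) sits at B + 3 k + j.  The
   output for (k, j) is computed at 2 B + 3 k + j and then copied to 1 + 3 k + j, the
   first seven rows last, once the registers are no longer needed.  Jump targets are
   absolute positions in [prog]. *)
Definition save_cells : seq instr :=
  [:: IAdd 0 0 0; IAdd 0 0 0; IAdd 0 0 0; IAdd 0 0 0; IAdd 0 0 0;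
      IStore 0 1; IConst 1 0; IJle 0 1 175; IConst 1 1] ++
  flatten [seq [:: IAdd 0 0 1; IStore 0 j] | j <- iota 2 20].

Definition copy_rows : seq instr :=
  [:: IConst 10 20; ISub 5 0 10; IAdd 6 5 5; IConst 2 0; IConst 3 3;
      IConst 4 32; IConst 8 22; IConst 10 21; IAdd 9 5 10; IConst 7 224;
      IJle 5 7 74;
      ILoad 10 8; IStore 9 10; IAdd 8 8 1; IAdd 9 9 1;
      ILoad 10 8; IStore 9 10; IAdd 8 8 1; IAdd 9 9 1;
      ILoad 10 8; IStore 9 10; IAdd 8 8 1; IAdd 9 9 1;
      IAdd 7 7 4; IJle 1 1 59].

Definition rank_rows : seq instr :=
  [:: IConst 7 0; IAdd 8 5 2; IAdd 9 6 2;
      IJle 5 7 113;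
      ILoad 11 8; IAdd 10 8 1; ILoad 12 10; IConst 19 0; IConst 20 0;
      IAdd 13 5 2; IConst 14 0;
      IJle 5 14 104;
      ILoad 15 13; IAdd 10 13 1; ILoad 16 10;
      IJle 8 13 93; IAdd 17 11 1; IAdd 18 12 1; IJle 1 1 96;
      IJle 13 8 101; IAdd 17 11 2; IAdd 18 12 2;
      IJle 17 15 98; IAdd 19 19 1;
      IJle 18 16 100; IJle 1 1 101; IAdd 20 20 1;
      IAdd 13 13 3; IAdd 14 14 4; IJle 1 1 85;
      IStore 9 19; IAdd 10 9 1; IStore 10 20; IAdd 10 10 1; IStore 10 19;
      IAdd 9 9 3; IAdd 8 8 3; IAdd 7 7 4; IJle 1 1 77].

Definition write_rows : seq instr :=
  [:: IConst 10 21; IAdd 8 6 10; IConst 9 22; IConst 7 224;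
      IJle 5 7 132;
      ILoad 10 8; IStore 9 10; IAdd 8 8 1; IAdd 9 9 1;
      ILoad 10 8; IStore 9 10; IAdd 8 8 1; IAdd 9 9 1;
      ILoad 10 8; IStore 9 10; IAdd 8 8 1; IAdd 9 9 1;
      IAdd 7 7 4; IJle 1 1 117].

Definition restore_cells : seq instr :=
  [:: IConst 10 20; IAdd 0 6 10] ++
  flatten [seq [:: ILoad j 0; ISub 0 0 1] | j <- rev (iota 2 20)] ++
  [:: ILoad 1 0; IHalt].

Definition prog : seq instr :=
  save_cells ++ copy_rows ++ rank_rows ++ write_rows ++ restore_cells.

Ltac mem_simpl := rewrite /upd /=;
  repeat match goal with H : ?M ?c = _ |- context [?M ?c] => is_var M; rewrite H end;
  repeat match goal with |- context [?x == ?y] =>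
    first [have -> : (x == y) = false by lia | have -> : (x == y) = true by lia]; rewrite /=
  end.

Ltac normalize_upd := match goal with
  | |- reach _ _ (upd _ _ _) _ _ _ =>
      apply: reach_upd; [mem_simpl; reflexivity | mem_simpl; reflexivity | ]
  | _ => idtac end.

Ltac decide_jump := match goal with
  | |- reach _ (if ?c then _ else _) _ _ _ _ =>
      first [have -> : c = true by mem_simpl; lia | have -> : c = false by mem_simpl; lia]
  | _ => idtac end.

Ltac run_step := apply: reach_stepN; [try lia |
  rewrite {1}/prog;
  cbn [step nth save_cells copy_rows rank_rows write_rows restore_cells
       cat flatten foldr map iota rev catrev];
  normalize_upd; decide_jump].

Ltac run_step_at e := apply: reach_step; rewrite /step e /=; normalize_upd.

Ltac run_to pc := repeat lazymatch goal with
  | |- reach _ pc _ _ _ _ => fail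
  | _ => run_step end.

Lemma prog_save_nth k : k < 20 ->
  nth IHalt prog (47 - k.*2) = IAdd 0 0 1 /\ nth IHalt prog (48 - k.*2) = IStore 0 (21 - k).
Proof.
move=> lt_k20; have : k \in iota 0 20 by rewrite mem_iota.
by do 20 (case/predU1P => [->|]; first by split; reflexivity).
Qed.

Lemma prog_restore_nth r : r < 20 ->
  nth IHalt prog (172 - r.*2) = ILoad r.+2 0 /\ nth IHalt prog (173 - r.*2) = ISub 0 0 1.
Proof.
move=> lt_r20; have : r \in iota 0 20 by rewrite mem_iota.
by do 20 (case/predU1P => [->|]; first by split; reflexivity).
Qed.

Lemma count_iotaS (a : pred nat) k : count a (iota 0 k.+1) = count a (iota 0 k) + a k.
Proof. by rewrite -addn1 iotaD count_cat /= addn0. Qed.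

Section Correctness.

Variables (f : nat -> nat) (m : nat).
Hypothesis m_gt0 : 0 < m.

Record saving j M : Prop := Saving {
  saving_ptr : M 0 = 32 * m + j - 2;
  saving_one : M 1 = 1;
  saving_saved : forall q, 0 < q < j -> M (32 * m + q - 1) = f q;
  saving_rest : forall x, j <= x < 32 * m -> M x = f x }.

Lemma save_start : f 0 = m -> reach prog 0 f 9 9 (saving 2).
Proof.
move=> f0; do 9 run_step.
apply: reach_done; split; mem_simpl; try lia.
- move=> q q_range; have -> : q = 1 by lia.
  by mem_simpl.
- by move=> x x_range; mem_simpl.
Qed.

Lemma save_loop k M : k <= 20 ->
  saving (22 - k) M -> reach prog (49 - k.*2) M k.*2 49 (saving 22).
Proof.
elim: k M => [|k IHk] M le_k20; first exact: reach_done.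
case=> M0 M1 saved rest; have [nth_add nth_store] := prog_save_nth le_k20.
rewrite doubleS (_ : 49 - _ = 47 - k.*2); last lia.
run_step_at nth_add; rewrite (_ : (47 - _).+1 = 48 - k.*2); last lia.
run_step_at nth_store; rewrite (_ : (48 - _).+1 = 49 - k.*2); last lia.
apply: IHk; first lia.
split; mem_simpl; try lia.
- move=> q q_range; mem_simpl; case: eqP => [eq_q|ne_q]; last by apply: saved; lia.
  by rewrite rest; [congr f | ]; lia.
- by move=> x x_range; mem_simpl; apply: rest; lia.
Qed.

Record consts M : Prop := Consts {
  reg_one : M 1 = 1; reg_zero : M 2 = 0; reg_three : M 3 = 3; reg_row : M 4 = 32;
  reg_data : M 5 = 32 * m; reg_out : M 6 = 64 * m }.

Lemma consts_upd M r v : 6 < r -> consts M -> consts (upd M r v).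
Proof. by move=> lt_6r [*]; split; mem_simpl. Qed.

Definition stored i M :=
  forall k j, k < i -> j < 3 -> M (32 * m + 3 * k + j) = f (1 + 3 * k + j).

Record copying i M : Prop := Copying {
  copying_consts : consts M;
  copying_row : M 7 = 32 * i;
  copying_src : M 8 = 1 + 3 * i;
  copying_dst : M 9 = 32 * m + 3 * i;
  copying_stored : stored i M;
  copying_rest : forall x, 22 <= x < 32 * m -> M x = f x }.

Lemma copy_start M : saving 22 M -> reach prog 49 M 10 59 (copying 7).
Proof.
move=> [M0 M1 saved rest]; do 10 run_step.
apply: reach_done; split; try by mem_simpl; lia.
- by split; mem_simpl; lia.
- move=> k j lt_k7 lt_j3; mem_simpl.
  by rewrite -saved; [congr M | ]; lia.
- by move=> x x_range; mem_simpl; apply: rest; lia.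
Qed.

Lemma copy_loop n i M : m - i = n -> 7 <= i -> copying i M ->
  reach prog 59 M (15 * n + 1) 74 (fun M => consts M /\ stored m M).
Proof.
elim: n i M => [|n IHn] i M def_n le_7i [[K1 K2 K3 K4 K5 K6] R7 R8 R9 st rest].
  run_step; apply: reach_done; split; first by split.
  by move=> k j lt_km lt_j3; apply: st; lia.
do 15 run_step.
apply: (reach_weaken _ (IHn i.+1 _ _ _ _)); try lia.
split; try by mem_simpl; lia.
- by split; mem_simpl; lia.
- move=> k j lt_ki lt_j3; mem_simpl.
  repeat case: ifP => /eqP ?; try (rewrite rest; [congr f | ]; lia).
  by apply: st; lia.
- by move=> x x_range; mem_simpl; apply: rest.
Qed.

Definition col j k := f (1 + 3 * k + j).

Definition out k j :=
  if j == 1 then rank (lex_gt (col 1)) m k else rank (lex_lt (col 0)) m k.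

Definition ranked i M := forall k j, k < i -> j < 3 -> M (64 * m + 3 * k + j) = out k j.

Record ranking i M : Prop := Ranking {
  ranking_consts : consts M;
  ranking_stored : stored m M;
  ranking_row : M 7 = 32 * i;
  ranking_src : M 8 = 32 * m + 3 * i;
  ranking_dst : M 9 = 64 * m + 3 * i;
  ranking_ranked : ranked i M }.

Record counting i k M : Prop := Counting {
  counting_ranking : ranking i M;
  counting_a : M 11 = col 0 i;
  counting_b : M 12 = col 1 i;
  counting_ptr : M 13 = 32 * m + 3 * k;
  counting_row : M 14 = 32 * k;
  counting_below : M 19 = count (lex_lt (col 0) ^~ i) (iota 0 k);
  counting_above : M 20 = count (lex_gt (col 1) ^~ i) (iota 0 k) }.

Lemma ranking_upd i M r v : 9 < r < 22 -> ranking i M -> ranking i (upd M r v).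
Proof.
move=> r_range [K st R7 R8 R9 rk]; split; first by apply: consts_upd => //; lia.
all: try by move=> k j *; mem_simpl; first [apply: st | apply: rk].
all: by mem_simpl.
Qed.

Lemma counting_upd i k M r v : r \in [:: 10; 15; 16; 17; 18] ->
  counting i k M -> counting i k (upd M r v).
Proof.
rewrite !inE => r_in [R *]; split; first by apply: ranking_upd => //; lia.
all: by mem_simpl; lia.
Qed.

Lemma rank_start M : consts M /\ stored m M -> reach prog 74 M 3 77 (ranking 0).
Proof.
move=> [[K1 K2 K3 K4 K5 K6] st]; do 3 run_step.
apply: reach_done; split; try by mem_simpl; lia.
- by split; mem_simpl; lia.
- by move=> k j *; mem_simpl; apply: st.
- by [].
Qed.

Lemma count_start i M : i < m -> ranking i M -> reach prog 77 M 8 85 (counting i 0).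
Proof.
move=> lt_im R; have [[K1 K2 K3 K4 K5 K6] st R7 R8 R9 rk] := R.
have st_a : M (32 * m + 3 * i) = col 0 i by rewrite -[_ + 3 * i]addn0 st.
have st_b : M (32 * m + 3 * i + 1) = col 1 i by rewrite st.
do 8 run_step; apply: reach_done; split; try by mem_simpl.
by repeat (apply: ranking_upd => //).
Qed.

(* Rows are compared through [col j i + (k < i) <= col j k]; adding [k < i] realizes
   the tie-break by index of [lex_lt] and [lex_gt]. *)
Lemma compare_step i k M : k != i -> counting i k M ->
  M 15 = col 0 k -> M 16 = col 1 k ->
  M 17 = col 0 i + (k < i) -> M 18 = col 1 i + (k < i) ->
  reach prog 96 M 7 85 (counting i k.+1).
Proof.
move=> ne_ki [R A B P13 P14 C19 C20] M15 M16 M17 M18.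
have [[K1 K2 K3 K4 K5 K6] _ _ _ _ _] := R.
have cnt_a : count (lex_lt (col 0) ^~ i) (iota 0 k.+1) =
             M 19 + ~~ (col 0 i + (k < i) <= col 0 k).
  by rewrite count_iotaS C19 /= lex_ltE // ltnNge.
have cnt_b : count (lex_gt (col 1) ^~ i) (iota 0 k.+1) =
             M 20 + (col 1 i + (k < i) <= col 1 k).
  by rewrite count_iotaS C20 /= lex_gtE.
case: (leqP (col 0 i + (k < i)) (col 0 k)) => cmp_a;
  case: (leqP (col 1 i + (k < i)) (col 1 k)) => cmp_b; run_to 85.
all: apply: reach_done; split; rewrite ?cnt_a ?cnt_b; try by mem_simpl; lia.
all: by repeat (apply: ranking_upd => //).
Qed.

Lemma count_loop i n k M : m - k = n -> k <= m -> counting i k M ->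
  reach prog 85 M (16 * n + 1) 104 (counting i m).
Proof.
elim: n k M => [|n IHn] k M def_n le_km cnt.
  have eq_km : k = m by lia.
  have [[[K1 K2 K3 K4 K5 K6] _ _ _ _ _] _ _ _ P14 _ _] := cnt.
  by subst k; run_step; apply: reach_done.
have [R A B P13 P14 C19 C20] := cnt; have [[K1 K2 K3 K4 K5 K6] st _ R8 _ _] := R.
have st_a : M (32 * m + 3 * k) = col 0 k by rewrite -[_ + 3 * k]addn0 st //; lia.
have st_b : M (32 * m + 3 * k + 1) = col 1 k by rewrite st //; lia.
have IH' M' : counting i k.+1 M' -> reach prog 85 M' (16 * n + 1) 104 (counting i m).
  by move=> cnt'; apply: IHn cnt'; lia.
do 4 run_step; case: (ltngtP k i) => cmp_ki.
- do 4 run_step.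
  apply: (reach_weaken _ (reach_seq (compare_step _ _ _ _ _ _) IH')); try by mem_simpl; lia.
  by repeat (apply: counting_upd => //).
- do 4 run_step.
  apply: (reach_weaken _ (reach_seq (compare_step _ _ _ _ _ _) IH')); try by mem_simpl; lia.
  by repeat (apply: counting_upd => //).
- subst k; do 5 run_step.
  apply: (reach_weaken _ (IH' _ _)); first lia.
  split; rewrite ?count_iotaS /= ?lex_lt_irr ?lex_gt_irr; try by mem_simpl; lia.
  by repeat (apply: ranking_upd => //).
Qed.

Lemma count_finish i M : i < m -> counting i m M -> reach prog 104 M 9 77 (ranking i.+1).
Proof.
move=> lt_im [[[K1 K2 K3 K4 K5 K6] st R7 R8 R9 rk] A B P13 P14 C19 C20].
do 9 run_step; apply: reach_done; split; try by mem_simpl; lia.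
- by split; mem_simpl.
- by move=> k j *; mem_simpl; apply: st.
- move=> k j lt_ki lt_j3; case: (ltngtP k i) => [lt_k_i|gt_k_i|->]; [|lia|].
    by mem_simpl; apply: rk.
  by case: j lt_j3 => [|[|[|j]]] // _; mem_simpl.
Qed.

Lemma rank_loop n i M : m - i = n -> i <= m -> ranking i M ->
  reach prog 77 M ((16 * m + 20) * n + 1) 113 (ranking m).
Proof.
elim: n i M => [|n IHn] i M def_n le_im R.
  have eq_im : i = m by lia.
  have [[K1 K2 K3 K4 K5 K6] _ R7 _ _ _] := R.
  by subst i; run_step; apply: reach_done.
have lt_im : i < m by lia.
apply: reach_weaken; last first.
  apply: reach_seq (count_start lt_im R) _ => M1 cnt.
  apply: reach_seq (count_loop (subn0 m) (leq0n m) cnt) _ => M2 cnt'.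
  apply: reach_seq (count_finish lt_im cnt') _ => M3 R'.
  by apply: IHn R'; lia.
by rewrite mulnS; nia.
Qed.

Definition written i M := forall k j, 7 <= k < i -> j < 3 -> M (1 + 3 * k + j) = out k j.

Record writing i M : Prop := Writing {
  writing_consts : consts M;
  writing_row : M 7 = 32 * i;
  writing_src : M 8 = 64 * m + 3 * i;
  writing_dst : M 9 = 1 + 3 * i;
  writing_ranked : ranked m M;
  writing_written : written i M }.

Lemma write_start M : ranking m M -> reach prog 113 M 4 117 (writing 7).
Proof.
move=> [[K1 K2 K3 K4 K5 K6] _ _ _ _ rk]; do 4 run_step.
apply: reach_done; split; try by mem_simpl; lia.
- by split; mem_simpl.
- by move=> k j *; mem_simpl; apply: rk.
- by move=> k j k_range; lia.
Qed.

Lemma write_loop n i M : m - i = n -> 7 <= i -> writing i M ->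
  reach prog 117 M (15 * n + 1) 132
    (fun M => [/\ M 1 = 1, M 6 = 64 * m, ranked m M & written m M]).
Proof.
elim: n i M => [|n IHn] i M def_n le_7i [[K1 K2 K3 K4 K5 K6] R7 R8 R9 rk wr].
  run_step; apply: reach_done; split=> // k j k_range lt_j3; apply: wr => //; lia.
have out_i j : j < 3 -> M (64 * m + 3 * i + j) = out i j by move=> lt_j3; apply: rk; lia.
have out_i2 : M (64 * m + 3 * i + 1 + 1) = out i 2 by rewrite -out_i //; congr M; lia.
have := out_i 0 isT; rewrite addn0 => out_i0; have out_i1 := out_i 1 isT.
do 15 run_step.
apply: (reach_weaken _ (IHn i.+1 _ _ _ _)); try lia.
split; try by mem_simpl; lia.
- by split; mem_simpl; lia.
- by move=> k j *; mem_simpl; apply: rk.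
- move=> k j k_range lt_j3; case: (ltngtP k i) => [lt_ki|gt_ki|->]; [|lia|].
    by mem_simpl; apply: wr; lia.
  by case: j lt_j3 => [|[|[|j]]] // _; mem_simpl.
Qed.

Record restoring q M : Prop := Restoring {
  restoring_ptr : M 0 = 64 * m + q - 1;
  restoring_one : M 1 = 1;
  restoring_ranked : ranked m M;
  restoring_written : written m M;
  restoring_low : forall k j, k < 7 -> k < m -> j < 3 -> q < 1 + 3 * k + j ->
    M (1 + 3 * k + j) = out k j }.

Lemma restore_start M : [/\ M 1 = 1, M 6 = 64 * m, ranked m M & written m M] ->
  reach prog 132 M 2 134 (restoring 21).
Proof.
move=> [M1 M6 rk wr]; do 2 run_step.
apply: reach_done; split; try by mem_simpl; lia.
- by move=> k j *; mem_simpl; apply: rk.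
- by move=> k j *; mem_simpl; apply: wr.
Qed.

Lemma restore_loop r M : r <= 20 ->
  restoring r.+1 M -> reach prog (174 - r.*2) M r.*2 174 (restoring 1).
Proof.
elim: r M => [|r IHr] M le_r20; first exact: reach_done.
case=> M0 M1 rk wr low; have [nth_load nth_sub] := prog_restore_nth le_r20.
rewrite doubleS (_ : 174 - _ = 172 - r.*2); last lia.
run_step_at nth_load; rewrite (_ : (172 - _).+1 = 173 - r.*2); last lia.
run_step_at nth_sub; rewrite (_ : (173 - _).+1 = 174 - r.*2); last lia.
apply: IHr; first lia.
split; try by mem_simpl; lia.
- by move=> k j *; mem_simpl; apply: rk.
- by move=> k j *; mem_simpl; apply: wr.
- move=> k j lt_k7 lt_km lt_j3 lt_rk; mem_simpl; case: eqP => [eq_r|ne_r].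
    by rewrite (_ : 64 * m + _ - 1 = 64 * m + 3 * k + j) ?rk //; lia.
  by apply: low; lia.
Qed.

Definition outputs M := forall k j, k < m -> j < 3 -> M (1 + 3 * k + j) = out k j.

Lemma restore_finish M : restoring 1 M -> reach prog 174 M 1 175 outputs.
Proof.
move=> [M0 M1 rk wr low]; run_step; apply: reach_done.
move=> k j lt_km lt_j3; mem_simpl; case: eqP => [eq_1|ne_1].
  have [-> ->] : k = 0 /\ j = 0 by lia.
  by rewrite -(rk 0 0) //; congr M; lia.
by case: (ltnP k 7) => [lt_k7|le_7k]; [apply: low | apply: wr]; lia.
Qed.

Lemma prog_outputs : f 0 = m -> reach prog 0 f (200 * m.+1 ^ 2) 175 outputs.
Proof.
move=> f0; apply: reach_weaken; last first.
  apply: reach_seq (save_start f0) _ => M1 inv1.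
  apply: reach_seq (save_loop (isT : 20 <= 20) inv1) _ => M2 inv2.
  apply: reach_seq (copy_start inv2) _ => M3 inv3.
  apply: reach_seq (copy_loop (erefl _) (isT : 7 <= 7) inv3) _ => M4 inv4.
  apply: reach_seq (rank_start inv4) _ => M5 inv5.
  apply: reach_seq (rank_loop (subn0 m) (leq0n m) inv5) _ => M6 inv6.
  apply: reach_seq (write_start inv6) _ => M7 inv7.
  apply: reach_seq (write_loop (erefl _) (isT : 7 <= 7) inv7) _ => M8 inv8.
  apply: reach_seq (restore_start inv8) _ => M9 inv9.
  apply: reach_seq (restore_loop (isT : 20 <= 20) inv9) _ => M10 inv10.
  exact: restore_finish inv10.
nia.
Qed.

End Correctness.

Lemma encode_input_entry m d (A : 'M[nat]_(m, d)) k j : k < m -> j < d ->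
  encode_input A (1 + d * k + j) = entry A k j.
Proof.
move=> lt_km lt_jd; rewrite -addnA add1n /= mulnC.
have d_gt0 : 0 < d by apply: leq_ltn_trans lt_jd.
by rewrite ifT ?divnMDl ?divn_small ?addn0 ?modnMDl ?modn_small //; nia.
Qed.

Lemma prog_correct m (A : 'M[nat]_(m, 3)) :
  reach prog 0 (encode_input A) (200 * m.+1 ^ 2) 175 (outputs (encode_input A) m).
Proof.
case: (posnP m) => [m0 | m_gt0]; last exact: prog_outputs.
(* For m = 0 the program saves cell 1 into cell 0, the value it tests for halting;
   it is 0 since the encoding leaves cell 1 empty. *)
subst m; set f := encode_input A; have f0 : f 0 = 0 by []; have f1 : f 1 = 0 by [].
by do 8 run_step; apply: reach_done => k j; rewrite ltn0.
Qed.

Lemma out_encode m (A : 'M[nat]_(m, 3)) (i : 'I_m) (j : 'I_3) :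
  out (encode_input A) m i j = sorting_perms A j i.
Proof.
rewrite /out ffunE; case: (j == 1 :> nat); rewrite rank_permE;
  apply: eq_in_count => k; rewrite mem_iota => k_range;
  by rewrite /= /lex_gt /lex_lt /col !encode_input_entry.
Qed.

Theorem lemma2 :
  exists (p : seq instr) (c k : nat),
    forall (m : nat) (A : 'M[nat]_(m, 3)),
      exists (t : nat) (M : nat -> nat) (P : {ffun 'I_3 -> 'S_m}),
        [/\ t <= c * (input_size A).+1 ^ k,
            exec p t (0, encode_input A) = Some M,
            output_encodes M P
          & maxrowsum A P <= 2 * gamma A].
Proof.
exists prog, 200, 2 => m A.
have halt : nth IHalt prog 175 = IHalt by [].
have [M out_M run] := reach_halt halt (prog_correct A).
exists (200 * m.+1 ^ 2), M, (sorting_perms A); split=> //.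
- by rewrite leq_mul2l leq_exp2r // ltnS leq_addr.
- by move=> i j; rewrite out_M // out_encode.
- exact: maxrowsum_sorting_perms.
Qed.
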